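(* Assume standing assumption (A), let $(x^*,\lambda^* )$ be a KKT pair, let $\rho>0$, and let $\hat x\in X$, $\hat\lambda\in\mathbb R^J_+$ be fixed vectors. Let $C:X\times\mathbb R^J_+\to\mathbb R$ be a function such that $$F(x)^T(\hat x-x)+J^{-1}f(\hat x)^T\lambda\ \le\ \Phi_\rho(x,\hat\lambda)+C(x,\lambda)\qquad\text{for all }x\in X,\ \lambda\in\mathbb R^J_+.$$ Then: (i) $J^{-1}\mathbf 1^T[f(\hat x)]_+\le C(x^*,\tilde\lambda)$, where $\tilde\lambda\in\mathbb R^J_+$ is defined by $\tilde\lambda_j=1+\lambda^*_j$ if $f_j(\hat x)>0$ and $\tilde\lambda_j=0$ otherwise; (ii) $\sup_{x\in\mathcal X}F(x)^T(\hat x-x)\le\sup_{x\in\mathcal X}C(x,0)$.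
   Context: Let $n,J\ge 1$ be integers, $[J]=\{1,\dots,J\}$, $X\subseteq\mathbb R^n$, $F:\mathbb R^n\to\mathbb R^n$, and $f_1,\dots,f_J:\mathbb R^n\to\mathbb R$; write $f(x)=(f_1(x),\dots,f_J(x))^T$, $[a]_+=\max(a,0)$ componentwise, $\mathbf 1$ the all-ones vector, and $\mathcal X=\{x\in X: f_j(x)\le 0\ \forall j\in[J]\}$. Standing assumption (A): (i) $F$ is continuous and monotone on $X$; (ii) each $f_j$ is convex; (iii) $X$ is nonempty, compact and convex; (iv) (Slater) there exists $\hat x\in X$ with $f_j(\hat x)<0$ for all $j$. A pair $(x^*,\lambda^* )$ is a KKT pair if: $x^*\in X$; $\lambda^*\ge 0$, $f(x^* )\le 0$, $\lambda_j^*f_j(x^* )=0$ for all $j$; and there exist $g_j\in\partial f_j(x^* )$ with $0\in F(x^* )+J^{-1}\sum_j\lambda_j^*g_j+\mathcal N_X(x^* )$. For $\rho>0$, $u,v\in\mathbb R$ let $\phi_\rho(u,v)=uv+\frac{\rho}{2}u^2$ if $\rho u+v\ge 0$ and $\phi_\rho(u,v)=-\frac{v^2}{2\rho}$ otherwise, and for $x\in\mathbb R^n$, $\lambda\in\mathbb R^J$ let $\Phi_\rho(x,\lambda)=\frac1J\sum_{j=1}^J\phi_\rho(f_j(x),\lambda^{(j)})$, where $\lambda^{(j)}$ is the $j$-th component of $\lambda$. *)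

From HB Require Import structures.
From mathcomp Require Import all_boot all_order all_algebra.
From mathcomp Require Import all_classical all_reals all_analysis.
Set Implicit Arguments. Unset Strict Implicit. Unset Printing Implicit Defensive.
Import Order.TTheory GRing.Theory Num.Theory.
Import numFieldNormedType.Exports.
Local Open Scope classical_set_scope.
Local Open Scope ring_scope.

Section Defs.
Variable R : realType.

Definition dotp (n : nat) (u v : 'rV[R]_n) : R := \sum_(i < n) u 0 i * v 0 i.

Definition convex_set (n : nat) (X : set 'rV[R]_n) : Prop :=
  forall x y (t : R), X x -> X y -> 0 <= t -> t <= 1 -> X (t *: x + (1 - t) *: y).

Definition convex_fun (n : nat) (g : 'rV[R]_n -> R) : Prop :=
  forall x y (t : R), 0 <= t -> t <= 1 ->
    g (t *: x + (1 - t) *: y) <= t * g x + (1 - t) * g y.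

Definition monotone_on (n : nat) (F : 'rV[R]_n -> 'rV[R]_n) (X : set 'rV[R]_n) : Prop :=
  forall x y, X x -> X y -> 0 <= dotp (F x - F y) (x - y).

Definition subdiff (n : nat) (g : 'rV[R]_n -> R) (x : 'rV[R]_n) : set 'rV[R]_n :=
  [set s | forall y, g x + dotp s (y - x) <= g y].

Definition normal_cone (n : nat) (X : set 'rV[R]_n) (x : 'rV[R]_n) : set 'rV[R]_n :=
  [set v | forall y, X y -> dotp v (y - x) <= 0].

Definition standing_A (n J : nat) (X : set 'rV[R]_n) (F : 'rV[R]_n -> 'rV[R]_n)
    (f : 'I_J -> 'rV[R]_n -> R) : Prop :=
  [/\ {within X, continuous F} /\ monotone_on F X,
      (forall j, convex_fun (f j)),
      [/\ X !=set0, compact X & convex_set X] &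
      exists xs, X xs /\ forall j, f j xs < 0].

Definition KKT_pair (n J : nat) (X : set 'rV[R]_n) (F : 'rV[R]_n -> 'rV[R]_n)
    (f : 'I_J -> 'rV[R]_n -> R) (xs : 'rV[R]_n) (ls : 'rV[R]_J) : Prop :=
  [/\ X xs,
      (forall j, 0 <= ls 0 j /\ f j xs <= 0 /\ ls 0 j * f j xs = 0) &
      exists g : 'I_J -> 'rV[R]_n, (forall j, subdiff (f j) xs (g j)) /\
        normal_cone X xs (- (F xs + J%:R^-1 *: \sum_(j < J) ls 0 j *: g j))].

Definition phi (rho u v : R) : R :=
  if 0 <= rho * u + v then u * v + rho / 2 * u ^+ 2 else - (v ^+ 2 / (2 * rho)).

Definition Phi (n J : nat) (f : 'I_J -> 'rV[R]_n -> R) (rho : R)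
    (x : 'rV[R]_n) (l : 'rV[R]_J) : R :=
  J%:R^-1 * \sum_(j < J) phi rho (f j x) (l 0 j).

Definition fvec (n J : nat) (f : 'I_J -> 'rV[R]_n -> R) (x : 'rV[R]_n) : 'rV[R]_J :=
  \row_(j < J) f j x.

Definition nonneg_vec (J : nat) (l : 'rV[R]_J) : Prop := forall j, 0 <= l 0 j.

Definition feasible (n J : nat) (X : set 'rV[R]_n) (f : 'I_J -> 'rV[R]_n -> R) :
  set 'rV[R]_n := [set x | X x /\ forall j, f j x <= 0].

End Defs.

From HB Require Import structures.
From mathcomp Require Import all_boot all_order all_algebra.
From mathcomp Require Import all_classical all_reals all_analysis.
From mathcomp Require Import ring lra.
Import Order.TTheory GRing.Theory Num.Theory.
Import numFieldNormedType.Exports.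
Local Open Scope classical_set_scope.
Local Open Scope ring_scope.
Set Implicit Arguments.
Unset Strict Implicit.

(* The hypothesis on C is used at two kinds of points.
   (i)  At the KKT point xs, which is feasible, every term phi_rho(f_j xs, lh_j)
        is nonpositive, so Phi_rho(xs, lh) <= 0.  The KKT conditions (normal cone
        inclusion, subgradient inequality, complementarity) give the Lagrangian
        gap inequality  0 <= F(xs)^T(y - xs) + J^-1 sum_j ls_j f_j(y)  for y in X.
        Choosing the multiplier lt_j = (1 + ls_j) [f_j(xh) > 0] yields
        f(xh)^T lt = sum_j [f_j xh]_+ + sum_j ls_j [f_j xh]_+, and the ls-part is
        absorbed by the gap inequality, leaving J^-1 1^T [f(xh)]_+ <= C(xs, lt).
   (ii) At a feasible x with multiplier 0 the hypothesis reads
        F(x)^T(xh - x) <= Phi_rho(x, lh) + C(x, 0) <= C(x, 0); a pointwise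
        inequality between functions passes to their suprema over the feasible set. *)

Section InnerProduct.
Variable R : realType.

Lemma dotpDl n (u w v : 'rV[R]_n) : dotp (u + w) v = dotp u v + dotp w v.
Proof. by rewrite /dotp -big_split; apply: eq_bigr => i _; rewrite !mxE mulrDl. Qed.

Lemma dotpNl n (u v : 'rV[R]_n) : dotp (- u) v = - dotp u v.
Proof. by rewrite /dotp -sumrN; apply: eq_bigr => i _; rewrite !mxE mulNr. Qed.

Lemma dotpZl n (a : R) (u v : 'rV[R]_n) : dotp (a *: u) v = a * dotp u v.
Proof. by rewrite /dotp mulr_sumr; apply: eq_bigr => i _; rewrite !mxE mulrA. Qed.

Lemma dotp_suml n J (g : 'I_J -> 'rV[R]_n) (v : 'rV[R]_n) :
  dotp (\sum_(j < J) g j) v = \sum_(j < J) dotp (g j) v.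
Proof.
rewrite /dotp; under eq_bigr do rewrite summxE mulr_suml.
exact: exchange_big.
Qed.

Lemma dotp0r n (u : 'rV[R]_n) : dotp u 0 = 0.
Proof. by rewrite /dotp big1 // => i _; rewrite mxE mulr0. Qed.

End InnerProduct.

Section AugmentedLagrangian.
Variable R : realType.

Lemma phi_le0 (rho u v : R) : 0 < rho -> u <= 0 -> 0 <= v -> phi rho u v <= 0.
Proof.
move=> rho_gt0 u_le0 v_ge0; rewrite /phi; case: ifP => [active|_].
  have prod_le0 : u * (rho * u + v) <= 0 by exact: mulr_le0_ge0 u_le0 active.
  have quad_ge0 : 0 <= rho / 2 * u ^+ 2 by rewrite mulr_ge0 ?sqr_ge0 ?divr_ge0 ?ltW.
  have -> : u * v + rho / 2 * u ^+ 2 = u * (rho * u + v) - rho / 2 * u ^+ 2.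
    by rewrite expr2; field.
  lra.
by rewrite oppr_le0 divr_ge0 ?sqr_ge0 // mulr_ge0 // ltW.
Qed.

Lemma Phi_le0 n J (f : 'I_J -> 'rV[R]_n -> R) (rho : R) (x : 'rV[R]_n) (l : 'rV[R]_J) :
  0 < rho -> (forall j, f j x <= 0) -> nonneg_vec l -> Phi f rho x l <= 0.
Proof.
move=> rho_gt0 fx_le0 l_ge0; rewrite /Phi mulr_ge0_le0 ?invr_ge0 ?ler0n //.
by apply: sumr_le0 => j _; apply: phi_le0.
Qed.

End AugmentedLagrangian.

Section KKT.
Variables (R : realType) (n J : nat) (X : set 'rV[R]_n).
Variables (F : 'rV[R]_n -> 'rV[R]_n) (f : 'I_J -> 'rV[R]_n -> R).

Lemma KKT_lagrangian_gap (xs : 'rV[R]_n) (ls : 'rV[R]_J) (y : 'rV[R]_n) :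
  KKT_pair X F f xs ls -> X y ->
  0 <= dotp (F xs) (y - xs) + J%:R^-1 * \sum_(j < J) ls 0 j * f j y.
Proof.
move=> [_ hls [g [g_sub normal]]] Xy.
have := normal y Xy.
rewrite dotpNl dotpDl dotpZl dotp_suml oppr_le0 => gap.
apply: le_trans gap _; rewrite lerD2l ler_wpM2l ?invr_ge0 ?ler0n //.
apply: ler_sum => j _; have [l_ge0 [_ compl]] := hls j.
(* subgradient inequality, then complementarity ls_j f_j(xs) = 0 *)
by rewrite dotpZl; have := ler_wpM2l l_ge0 (g_sub j y); rewrite mulrDr compl add0r.
Qed.

End KKT.

Section Multiplier.
Variables (R : realType) (n J : nat) (f : 'I_J -> 'rV[R]_n -> R).

Definition violation_multiplier (l : 'rV[R]_J) (y : 'rV[R]_n) : 'rV[R]_J :=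
  \row_(j < J) (if 0 < f j y then 1 + l 0 j else 0).

Lemma violation_multiplier_nonneg (l : 'rV[R]_J) (y : 'rV[R]_n) :
  nonneg_vec l -> nonneg_vec (violation_multiplier l y).
Proof. by move=> l_ge0 j; rewrite mxE; case: ifP => // _; rewrite addr_ge0. Qed.

Lemma dotp_violation_multiplier (l : 'rV[R]_J) (y : 'rV[R]_n) :
  dotp (fvec f y) (violation_multiplier l y) =
  \sum_(j < J) Num.max (f j y) 0 + \sum_(j < J) l 0 j * Num.max (f j y) 0.
Proof.
rewrite /dotp -big_split; apply: eq_bigr => j _; rewrite !mxE.
by case: (ltP 0 (f j y)) => _ /=; ring.
Qed.

End Multiplier.

Lemma ereal_sup_image_le (R : realType) (T : Type) (A : set T) (a b : T -> R) :
  (forall x, A x -> a x <= b x) ->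
  (ereal_sup [set (a x)%:E | x in A] <= ereal_sup [set (b x)%:E | x in A])%E.
Proof.
move=> le_ab; apply: ge_ereal_sup => _ [x Ax <-].
apply: le_trans (ereal_sup_ubound _); last by exists x.
by rewrite lee_fin le_ab.
Qed.

Theorem mainTheorem3 (R : realType) (n J : nat) (X : set 'rV[R]_n)
    (F : 'rV[R]_n -> 'rV[R]_n) (f : 'I_J -> 'rV[R]_n -> R)
    (xs : 'rV[R]_n) (ls : 'rV[R]_J) (rho : R)
    (xh : 'rV[R]_n) (lh : 'rV[R]_J) (C : 'rV[R]_n -> 'rV[R]_J -> R) :
  (0 < n)%N -> (0 < J)%N ->
  standing_A X F f ->
  KKT_pair X F f xs ls ->
  0 < rho ->
  X xh -> nonneg_vec lh ->
  (forall x l, X x -> nonneg_vec l ->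
     dotp (F x) (xh - x) + J%:R^-1 * dotp (fvec f xh) l <= Phi f rho x lh + C x l) ->
  (J%:R^-1 * \sum_(j < J) Num.max (f j xh) 0
     <= C xs (\row_(j < J) (if 0 < f j xh then 1 + ls 0 j else 0)))
  /\
  (ereal_sup [set (dotp (F x) (xh - x))%:E | x in feasible X f]
     <= ereal_sup [set (C x 0)%:E | x in feasible X f])%E.
Proof.
move=> _ _ _ kkt rho_gt0 Xxh lh_ge0 hypC.
have [Xxs hls _] := kkt.
have ls_ge0 : nonneg_vec ls by move=> j; have [] := hls j.
split.
- rewrite -/(violation_multiplier f ls xh).
  have := hypC _ _ Xxs (violation_multiplier_nonneg f xh ls_ge0).
  rewrite dotp_violation_multiplier mulrDr.
  have Phi_xs : Phi f rho xs lh <= 0.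
    by apply: Phi_le0 => // j; have [_ []] := hls j.
  have := KKT_lagrangian_gap kkt Xxh.
  have viol : \sum_(j < J) ls 0 j * f j xh <= \sum_(j < J) ls 0 j * Num.max (f j xh) 0.
    by apply: ler_sum => j _; rewrite ler_wpM2l // le_max lexx.
  have J_inv_ge0 : 0 <= J%:R^-1 :> R by rewrite invr_ge0 ler0n.
  have := ler_wpM2l J_inv_ge0 viol.
  lra.
- apply: ereal_sup_image_le => x [Xx fx_le0].
  have zero_ge0 : nonneg_vec (0 : 'rV[R]_J) by move=> j; rewrite mxE.
  have := hypC _ _ Xx zero_ge0.
  rewrite dotp0r mulr0 addr0.
  have := Phi_le0 rho_gt0 fx_le0 lh_ge0.
  lra.
Qed.
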